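(* Let $(R,\mathfrak{m})$ be an Artinian local ring with $|R/\mathfrak{m}|=q<\infty$ such that $R$ has only finitely many ideals. Then $|\mathfrak{m}^i|\le q^{|\mathbb{I}(\mathfrak{m}^i)|}$ for every $i\ge 1$, and $|R|\le q^{|\mathbb{I}(R)|}$.
   Context: All rings are commutative with $1\neq 0$. For an ideal $J$ of $R$, $\mathbb{I}(J)$ denotes the set of all ideals $I$ of $R$ with $I\subseteq J$. *)

From HB Require Import structures.
From mathcomp Require Import all_boot all_order all_algebra.
Set Implicit Arguments. Unset Strict Implicit. Unset Printing Implicit Defensive.
Import GRing.Theory.
Local Open Scope ring_scope.

Section IdealDefs.
Variable R : comNzRingType.

Definition is_ideal (I : R -> Prop) : Prop :=
  [/\ I 0, (forall x y, I x -> I y -> I (x + y)) & (forall a x, I x -> I (a * x))].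

Definition subideal (I J : R -> Prop) : Prop := forall x, I x -> J x.
Definition same_ideal (I J : R -> Prop) : Prop := forall x, I x <-> J x.

Definition ideal_gen (S : R -> Prop) : R -> Prop :=
  fun x => forall I, is_ideal I -> subideal S I -> I x.

Definition ideal_mul (I J : R -> Prop) : R -> Prop :=
  ideal_gen (fun x => exists a b, [/\ I a, J b & x = a * b]).

Fixpoint ideal_pow (I : R -> Prop) (n : nat) : R -> Prop :=
  match n with
  | 0%N => fun _ => True
  | n'.+1 => ideal_mul (ideal_pow I n') I
  end.

Definition is_maximal (M : R -> Prop) : Prop :=
  [/\ is_ideal M, ~ M 1 &
      forall I, is_ideal I -> subideal M I -> ~ I 1 -> subideal I M].

Definition is_local_with (m : R -> Prop) : Prop :=
  is_maximal m /\ forall M, is_maximal M -> same_ideal M m.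

Definition artinian : Prop :=
  forall I : nat -> R -> Prop, (forall n, is_ideal (I n)) ->
    (forall n, subideal (I n.+1) (I n)) ->
    exists N, forall n, (N <= n)%N -> same_ideal (I n) (I N).

Definition finitely_many_ideals : Prop :=
  exists L : seq (R -> Prop), forall I, is_ideal I ->
    exists2 i, (i < size L)%N & same_ideal I (nth (fun _ => False) L i).

(* |R / m| = q : there are exactly q cosets of m. *)
Definition quot_card (m : R -> Prop) (q : nat) : Prop :=
  exists r : seq R, [/\ size r = q,
    (forall i j, (i < size r)%N -> (j < size r)%N -> i <> j -> ~ m (nth 0 r i - nth 0 r j)) &
    (forall x, exists2 i, (i < size r)%N & m (x - nth 0 r i))].

(* |I(J)| = n : exactly n ideals I of R with I contained in J (up to equality of sets). *)
Definition num_ideals_in (J : R -> Prop) (n : nat) : Prop :=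
  exists L : seq (R -> Prop), [/\ size L = n,
    (forall i, (i < size L)%N -> is_ideal (nth (fun _ => False) L i) /\
                                 subideal (nth (fun _ => False) L i) J),
    (forall i j, (i < size L)%N -> (j < size L)%N -> i <> j ->
        ~ same_ideal (nth (fun _ => False) L i) (nth (fun _ => False) L j)) &
    (forall I, is_ideal I -> subideal I J ->
        exists2 i, (i < size L)%N & same_ideal I (nth (fun _ => False) L i))].

(* |S| <= N : every duplicate-free list of elements of S has length <= N. *)
Definition card_le (S : R -> Prop) (N : nat) : Prop :=
  forall s : seq R, uniq s -> (forall x, x \in s -> S x) -> (size s <= N)%N.

End IdealDefs.

From mathcomp Require Import all_boot all_order all_algebra.
From mathcomp Require Import boolp.
Set Implicit Arguments. Unset Strict Implicit. Unset Printing Implicit Defensive.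
Import GRing.Theory.

(* Induction on the number of ideals contained in an ideal J.  If J <> 0,
   finiteness of the set of ideals yields an ideal K maximal among the proper
   sub-ideals of J.  For x in J \ K maximality gives J = K + Rx and m x \subset K:
   otherwise x \in K + m x, so (1 - b) x \in K for some b in m, and 1 - b would lie
   in the proper ideal (K : x) \subset m.  Hence J is covered by the q cosets of K
   through the r_j x, where the r_j represent R/m, so |J| <= q |K|; and K contains
   fewer ideals than J. *)

Lemma count_lt (T : Type) (a b : pred T) (s : seq T) :
  subpred a b -> has (predD b a) s -> (count a s < count b s)%N.
Proof.
move=> sab; elim: s => //= x s IH /orP[/andP[nax bx] | has_s].
  by rewrite (negbTE nax) bx add1n ltnS sub_count.
have ab_x : (a x <= b x)%N by case: (a x) (sab x) => // ->.
by rewrite -addnS leq_add // IH.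
Qed.

Local Open Scope ring_scope.

Section Ideals.
Variable R : comNzRingType.
Implicit Types (I J K : R -> Prop) (S : R -> Prop).

Lemma is_ideal0 : is_ideal (fun x : R => x = 0).
Proof. by split=> // [x y -> ->|a x ->]; rewrite ?addr0 ?mulr0. Qed.

Lemma is_idealT : is_ideal (fun _ : R => True).
Proof. by []. Qed.

Lemma is_ideal_gen S : is_ideal (ideal_gen S).
Proof.
split=> [I [] // | x y Ix Iy I idI sSI | a x Ix I idI sSI]; case: (idI) => _ IA IM.
  by apply: IA; [apply: Ix | apply: Iy].
by apply: IM; apply: Ix.
Qed.

Lemma is_ideal_pow I n : is_ideal (ideal_pow I n).
Proof. by case: n => [|n]; [apply: is_idealT | apply: is_ideal_gen]. Qed.

Definition ideal_addM K I (x : R) : R -> Prop :=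
  fun z => exists k a, [/\ K k, I a & z = k + a * x].

Lemma is_ideal_addM K I x : is_ideal K -> is_ideal I -> is_ideal (ideal_addM K I x).
Proof.
move=> [K0 KD KM] [I0 ID IM]; split.
- by exists 0, 0; rewrite mul0r addr0.
- move=> _ _ [k1 [a1 [Kk1 Ia1 ->]]] [k2 [a2 [Kk2 Ia2 ->]]].
  by exists (k1 + k2), (a1 + a2); rewrite mulrDl addrACA; split; auto.
- move=> c _ [k [a [Kk Ia ->]]].
  by exists (c * k), (c * a); rewrite mulrDr mulrA; split; auto.
Qed.

Lemma ideal_addM_l K I x k : is_ideal I -> K k -> ideal_addM K I x k.
Proof. by case=> I0 _ _ Kk; exists k, 0; rewrite mul0r addr0. Qed.

Lemma ideal_addM_r K I x a : is_ideal K -> I a -> ideal_addM K I x (a * x).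
Proof. by case=> K0 _ _ Ia; exists 0, a; rewrite add0r. Qed.

Lemma ideal_addM_sub K I J x :
  is_ideal J -> subideal K J -> J x -> subideal (ideal_addM K I x) J.
Proof.
by case=> _ JD JM sKJ Jx _ [k [a [Kk _ ->]]]; apply: JD; [apply: sKJ | apply: JM].
Qed.

Definition ideal_colon K (x : R) : R -> Prop := fun c => K (c * x).

Lemma is_ideal_colon K x : is_ideal K -> is_ideal (ideal_colon K x).
Proof.
rewrite /ideal_colon; case=> K0 KD KM; split=> [|c d Kc Kd|a c Kc].
- by rewrite mul0r.
- by rewrite mulrDl; apply: KD.
- by rewrite -mulrA; apply: KM.
Qed.

Definition maximal_for (P : (R -> Prop) -> Prop) K :=
  [/\ is_ideal K, P K & forall K', is_ideal K' -> P K' -> subideal K K' -> subideal K' K].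

Definition enum_ideals_in J (L : seq (R -> Prop)) :=
  forall I, is_ideal I -> subideal I J -> has (fun I' => `[< same_ideal I I' >]) L.

Lemma num_ideals_in_enum J n :
  num_ideals_in J n -> exists2 L, size L = n & enum_ideals_in J L.
Proof.
case=> L [sizeL _ _ repL]; exists L => // I idI sIJ.
have [i ltiL eqI] := repL I idI sIJ.
by apply/(has_nthP (fun _ => False)); exists i => //; apply/asboolP.
Qed.

Lemma finitely_many_ideals_enum :
  finitely_many_ideals R -> exists L, enum_ideals_in (fun _ => True) L.
Proof.
case=> L repL; exists L => I idI _; have [i ltiL eqI] := repL I idI.
by apply/(has_nthP (fun _ => False)); exists i => //; apply/asboolP.
Qed.

Lemma enum_ideals_in_filter J K L : subideal K J -> enum_ideals_in J L ->
  enum_ideals_in K (filter (fun I => `[< subideal I K >]) L).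
Proof.
move=> sKJ enumJ I idI sIK.
have := enumJ I idI (fun x Ix => sKJ x (sIK x Ix)).
rewrite !has_count count_filter => /leq_trans; apply; apply: sub_count => I' /=.
move=> /asboolP eqI; apply/andP; split; apply/asboolP => // x /eqI; exact: sIK.
Qed.

Lemma card_le_mono S a b : card_le S a -> (a <= b)%N -> card_le S b.
Proof. by move=> Sa le_ab s us sS; apply: leq_trans (Sa s us sS) le_ab. Qed.

Lemma card_le0 S : subideal S (fun x => x = 0) -> card_le S 1.
Proof.
move=> S0 s us sS; apply: (uniq_leq_size (s2 := [:: 0])) => // x /sS /S0 ->.
exact: mem_head.
Qed.

Lemma card_le_cover S K N n (f : nat -> R) : card_le K N ->
  (forall y, S y -> exists2 j, (j < n)%N & K (y - f j)) -> card_le S (n * N).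
Proof.
move=> KN cover s us sS; pose p j y := `[< K (y - f j) >].
have count_le j : (count (p j) s <= N)%N.
  rewrite -size_filter -(size_map (fun y => y - f j)); apply: KN.
    by rewrite map_inj_uniq ?filter_uniq //; apply: addIr.
  by move=> z /mapP[y]; rewrite mem_filter => /andP[/asboolP Kyj _] ->.
apply: leq_trans (_ : \sum_(j < n) count (p j) s <= _)%N; last first.
  apply: (@leq_trans (\sum_(j < n) N)); first exact: leq_sum.
  by rewrite sum_nat_const card_ord.
elim: s us sS {count_le} => [|y s IH]; first by rewrite big1.
move=> /= /andP[_ us] sS.
rewrite big_split /= -add1n leq_add ?IH //; last first.
  by move=> z zs; apply: sS; rewrite inE zs orbT.
have [j ltjn Kyj] := cover y (sS y (mem_head _ _)).
by rewrite (bigD1 (Ordinal ltjn)) //= /p; case: asboolP.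
Qed.

Section FinitelyManyIdeals.
Variable L0 : seq (R -> Prop).
Hypothesis enumL0 : enum_ideals_in (fun _ => True) L0.

Let outside K := count (fun I => ~~ `[< subideal I K >]) L0.

Let outside_lt K K' : is_ideal K' -> subideal K K' -> ~ subideal K' K ->
  (outside K' < outside K)%N.
Proof.
move=> idK' sKK' nsK'K; apply: count_lt => [I | ].
  by apply: contraNN => /asboolP sIK; apply/asboolP => x /sIK /sKK'.
apply: sub_has (enumL0 idK' (fun _ _ => I)) => I' /asboolP eqI /=.
rewrite negbK; apply/andP; split; first by apply/asboolP => x /eqI.
by apply/asboolP; apply: contra_not nsK'K => sI'K x /eqI /sI'K.
Qed.

Lemma exists_maximal_for (P : (R -> Prop) -> Prop) I0 :
  is_ideal I0 -> P I0 -> exists2 K, maximal_for P K & subideal I0 K.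
Proof.
have [n] := ubnP (outside I0); elim: n I0 => // n IH I0; rewrite ltnS => le_n idI0 PI0.
have [[K' [idK' PK' sI0K' nsK'I0]] | no_larger] :=
  pselect (exists K', [/\ is_ideal K', P K', subideal I0 K' & ~ subideal K' I0]).
  have [K maxK sK'K] := IH K' (leq_trans (outside_lt idK' sI0K' nsK'I0) le_n) idK' PK'.
  by exists K => // x /sI0K' /sK'K.
exists I0 => //; split=> // K' idK' PK' sI0K'.
by apply: contrapT => nsK'I0; apply: no_larger; exists K'.
Qed.

Variable m : R -> Prop.
Hypothesis local_m : is_local_with m.

Lemma proper_ideal_sub_max I : is_ideal I -> ~ I 1 -> subideal I m.
Proof.
move=> idI nI1.
have [K [idK nK1 maxK] sIK] := exists_maximal_for (P := fun I => ~ I 1) idI nI1.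
have maximalK : is_maximal K by split=> // I0 idI0 sKI0 nI01; apply: maxK.
by move=> x /sIK /(local_m.2 K maximalK x).
Qed.

Variable r : seq R.
Hypothesis cosets : forall a, exists2 i, (i < size r)%N & m (a - nth 0 r i).

Section MaximalSubideal.
Variables (J K : R -> Prop) (x : R).
Hypotheses (idJ : is_ideal J) (Jx : J x) (nKx : ~ K x).
Hypothesis maxK : maximal_for (fun K' => subideal K' J /\ ~ subideal J K') K.

Let idK : is_ideal K. Proof. by case: maxK. Qed.

Let addM_sub_max I : is_ideal I -> ~ subideal J (ideal_addM K I x) ->
  subideal (ideal_addM K I x) K.
Proof.
case: maxK => _ [sKJ _] maxK' idI nsJ; apply: maxK'.
- exact: is_ideal_addM.
- by split=> //; apply: ideal_addM_sub.
- by move=> k; apply: ideal_addM_l.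
Qed.

Lemma maximal_subideal_gen : subideal J (ideal_addM K (fun _ => True) x).
Proof.
apply: contrapT => nsJ; apply: nKx; rewrite -[x]mul1r.
exact: addM_sub_max nsJ _ (ideal_addM_r _ _ _).
Qed.

Lemma maximal_subideal_annihilated b : m b -> K (b * x).
Proof.
have [[idm nm1 _] _] := local_m.
move=> mb; have [sJ | nsJ] := pselect (subideal J (ideal_addM K m x)); last first.
  exact: addM_sub_max nsJ _ (ideal_addM_r _ _ mb).
have [k [b' [Kk mb' x_eq]]] := sJ x Jx.
have colon_b' : ideal_colon K x (1 - b') by rewrite /ideal_colon mulrBl mul1r {1}x_eq addrK.
have proper_colon : ~ ideal_colon K x 1 by rewrite /ideal_colon mul1r.
have := proper_ideal_sub_max (is_ideal_colon x idK) proper_colon colon_b'.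
by case: idm => _ mD _ /(mD _ _)/(_ mb'); rewrite subrK.
Qed.

Lemma maximal_subideal_cover y : J y -> exists2 j, (j < size r)%N & K (y - nth 0 r j * x).
Proof.
move=> /maximal_subideal_gen[k [a [Kk _ ->]]]; have [j ltj maj] := cosets a.
exists j => //; rewrite -addrA -mulrBl; case: idK => _ KD _.
by apply: KD => //; apply: maximal_subideal_annihilated.
Qed.

End MaximalSubideal.

Lemma card_le_ideal J L :
  is_ideal J -> enum_ideals_in J L -> card_le J (size r ^ size L).
Proof.
have r_gt0 : (0 < size r)%N by have [i ltir _] := cosets 0; apply: leq_ltn_trans ltir.
have [n] := ubnP (size L); elim: n L J => // n IH L J; rewrite ltnS => le_n idJ enumJ.
have [J0 | nJ0] := pselect (subideal J (fun x => x = 0)).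
  by apply: card_le_mono (card_le0 J0) _; rewrite expn_gt0 r_gt0.
have J0_sub : subideal (fun x => x = 0) J by move=> x ->; case: idJ.
have [K maxK _] := exists_maximal_for (P := fun K => subideal K J /\ ~ subideal J K)
  is_ideal0 (conj J0_sub nJ0).
have [idK [sKJ nsJK] _] := maxK.
have [x [Jx nKx]] : exists x, J x /\ ~ K x.
  by move: nsJK; rewrite /subideal => /existsNP[x /not_implyP]; exists x.
set L' := filter (fun I => `[< subideal I K >]) L.
have ltL' : (size L' < size L)%N.
  rewrite size_filter -count_predT; apply: count_lt => //.
  apply: sub_has (enumJ J idJ (fun _ Jy => Jy)) => I /asboolP eqJI /=; rewrite andbT.
  by apply/asboolP => sIK; apply: nsJK => y /eqJI /sIK.
have IHK := IH L' K (leq_trans ltL' le_n) idK (enum_ideals_in_filter sKJ enumJ).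
apply: card_le_mono (card_le_cover IHK (maximal_subideal_cover idJ Jx nKx maxK)) _.
by rewrite -expnS leq_pexp2l.
Qed.

End FinitelyManyIdeals.
End Ideals.

Theorem lemma2p9 (R : comNzRingType) (m : R -> Prop) (q : nat) :
  is_local_with m -> artinian R -> quot_card m q -> finitely_many_ideals R ->
  (forall i n : nat, (1 <= i)%N -> num_ideals_in (ideal_pow m i) n ->
     card_le (ideal_pow m i) (q ^ n)) /\
  (forall n : nat, num_ideals_in (fun _ : R => True) n ->
     card_le (fun _ : R => True) (q ^ n)).
Proof.
move=> local_m _ [r [<- _ cosets]] /finitely_many_ideals_enum[L0 enumL0].
have bound (J : R -> Prop) n : is_ideal J -> num_ideals_in J n -> card_le J (size r ^ n).
  move=> idJ /num_ideals_in_enum[L <- enumJ].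
  exact: (card_le_ideal enumL0 local_m cosets idJ enumJ).
by split=> [i n _ | n]; apply: bound; [apply: is_ideal_pow | apply: is_idealT].
Qed.
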